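(* Let $(G,*,\le)$ be a totally ordered commutative semigroup, let $n\ge 1$, and let $a_1,a_2,\ldots,a_{2n}\in G$ (not necessarily distinct) with $a_1\le a_2\le\cdots\le a_{2n}$. Let $N\in G$. Suppose there are indices $i_1,j_1,\ldots,i_n,j_n$ with $\{i_1,j_1,\ldots,i_n,j_n\}=\{1,2,\ldots,2n\}$ (so these $2n$ indices are pairwise distinct and each of $1,\ldots,2n$ is used exactly once) such that $$a_{i_k}*a_{j_k}<N\quad\text{for all }k=1,\ldots,n.$$ Then $$a_k*a_{2n+1-k}<N\quad\text{for all }k=1,\ldots,n,$$ i.e. $a_1*a_{2n}<N$, $a_2*a_{2n-1}<N$, $\ldots$, $a_n*a_{n+1}<N$.
   Context: A totally ordered commutative semigroup is a triple $(G,*,\le)$ where $(G,* )$ is a commutative semigroup (an associative, commutative binary operation $*$ on a set $G$) and $\le$ is a total order on $G$ such that for all $\alpha,\beta,\gamma,\delta\in G$: if $\alpha\le\beta$ and $\gamma\le\delta$ then $\alpha*\gamma\le\beta*\delta$. Here $x<y$ means $x\le y$ and $x\ne y$. *)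

From HB Require Import structures.
From mathcomp Require Import all_boot all_order.
Set Implicit Arguments. Unset Strict Implicit. Unset Printing Implicit Defensive.
Import Order.TTheory.
Local Open Scope order_scope.

Definition tocs (d : Order.disp_t) (G : orderType d) (op : G -> G -> G) : Prop :=
  associative op /\ commutative op /\
  (forall x y z w : G, x <= y -> z <= w -> op x z <= op y w).

From HB Require Import structures.
From mathcomp Require Import all_boot all_order.
From mathcomp Require Import zify.
Set Implicit Arguments. Unset Strict Implicit. Unset Printing Implicit Defensive.
Import Order.TTheory.
Local Open Scope order_scope.

(* Fix k in [1, n] and put t := 2n + 1 - k.  Read the pairs
   {i l, j l} as a perfect matching of [1, 2n]; every index m has a partner.
   The k "top" indices t, ..., 2n cannot all have partners in the k - 1
   "bottom" indices 1, ..., k - 1, since matching partners form an injective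
   map (pigeonhole).  Hence some top index m has a partner p >= k, and as
   a is nondecreasing and op is monotone and commutative,
       a k * a t <= a p * a m < N. *)

Lemma nondecreasing_le (disp : Order.disp_t) (G : orderType disp)
    (M : nat) (a : nat -> G)
    (ha : forall k, (1 <= k)%N -> (k < M)%N -> a k <= a k.+1) :
  forall p q, (1 <= p)%N -> (p <= q)%N -> (q <= M)%N -> a p <= a q.
Proof.
move=> p q hp; elim: q => [|q IH] hpq hqM; first lia.
case: (eqVneq p q.+1) => [-> //|hne].
apply: le_trans (IH _ _) (ha q _ _); lia.
Qed.

Lemma interval_injection_card (f : nat -> nat) (s k b c : nat) :
    {in iota s k &, injective f} ->
    (forall m, (s <= m < s + k)%N -> (b <= f m < b + c)%N) ->
  (k <= c)%N.
Proof.
move=> finj frange.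
have uniq_img : uniq (map f (iota s k)) by rewrite map_inj_in_uniq // iota_uniq.
have sub_img : {subset map f (iota s k) <= iota b c}.
  by move=> x /mapP[m]; rewrite !mem_iota => /frange hm ->.
by have := uniq_leq_size uniq_img sub_img; rewrite size_map !size_iota.
Qed.

Section Matching.

Variables (n : nat) (i j : nat -> nat).
Hypothesis hrange : forall k, (1 <= k <= n)%N ->
  (1 <= i k <= 2 * n)%N /\ (1 <= j k <= 2 * n)%N.
Hypothesis hcover : forall m, (1 <= m <= 2 * n)%N ->
  exists k, (1 <= k <= n)%N /\ (i k = m \/ j k = m).
Hypothesis hij : forall k, (1 <= k <= n)%N -> i k <> j k.
Hypothesis hinj : forall k l, (1 <= k <= n)%N -> (1 <= l <= n)%N -> k <> l ->
  i k <> i l /\ i k <> j l /\ j k <> i l /\ j k <> j l.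

Definition pair_index (m : nat) : nat :=
  nth 0%N (iota 1 n) (find (fun l => (i l == m) || (j l == m)) (iota 1 n)).

Definition partner (m : nat) : nat :=
  if i (pair_index m) == m then j (pair_index m) else i (pair_index m).

Lemma pair_indexP (m : nat) : (1 <= m <= 2 * n)%N ->
  (1 <= pair_index m <= n)%N /\
  ((i (pair_index m) = m /\ j (pair_index m) = partner m) \/
   (j (pair_index m) = m /\ i (pair_index m) = partner m)).
Proof.
move=> hm; set P := fun l => (i l == m) || (j l == m).
have has_pair : has P (iota 1 n).
  have [l [hl hil]] := hcover hm.
  apply/hasP; exists l; first by rewrite mem_iota; lia.
  by rewrite /P; case: hil => ->; rewrite eqxx ?orbT.
have : pair_index m \in iota 1 n by apply: mem_nth; rewrite -has_find.
rewrite mem_iota => hl; split; first lia.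
have := nth_find 0%N has_pair; rewrite -/(pair_index m) /P /partner.
by case: eqVneq => [-> | _ /= /eqP ->]; [left | right].
Qed.

Lemma partner_range (m : nat) : (1 <= m <= 2 * n)%N ->
  (1 <= partner m <= 2 * n)%N.
Proof.
move=> /pair_indexP[/hrange[hi hj] pm].
by case: pm => -[_ <-].
Qed.

(* Since distinct pairs are disjoint and pairs have two distinct elements,
   the partner map is injective on [1, 2n]. *)
Lemma partner_inj (lo len : nat) : (1 <= lo)%N -> (lo + len <= 2 * n + 1)%N ->
  {in iota lo len &, injective partner}.
Proof.
move=> hlo hhi m1 m2; rewrite !mem_iota => hm1 hm2 same.
have [hl1 H1] := @pair_indexP m1 ltac:(lia).
have [hl2 H2] := @pair_indexP m2 ltac:(lia).
case: (eqVneq (pair_index m1) (pair_index m2)) => [e|/eqP ne].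
  have := hij hl1; move: H1 H2 same; rewrite -e.
  by case=> -[? ?] [] [? ?]; congruence.
have := hinj hl1 hl2 ne.
by case: H1 H2 => -[? ?] [] [? ?]; intuition congruence.
Qed.

Lemma top_index_with_high_partner (k : nat) : (1 <= k <= n)%N ->
  exists2 m, (2 * n + 1 - k <= m <= 2 * n)%N & (k <= partner m)%N.
Proof.
move=> hk; set t := (2 * n + 1 - k)%N.
have [/hasP[m]|/hasPn low] := boolP (has (fun m => k <= partner m)%N (iota t k)).
  by rewrite mem_iota => hm hp; exists m => //; lia.
suff : (k <= k.-1)%N by lia.
apply: (@interval_injection_card partner t k 1 k.-1).
  by apply: partner_inj; lia.
move=> m hm; have := @partner_range m ltac:(lia).
have := low m; rewrite mem_iota hm => /(_ isT); lia.
Qed.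

End Matching.

Theorem theorem2p2 (d : Order.disp_t) (G : orderType d) (op : G -> G -> G)
  (HG : tocs op) (n : nat) (hn : (1 <= n)%N) (a : nat -> G)
  (ha : forall k, (1 <= k)%N -> (k < 2 * n)%N -> a k <= a k.+1)
  (N : G) (i j : nat -> nat)
  (hrange : forall k, (1 <= k <= n)%N ->
      (1 <= i k <= 2 * n)%N /\ (1 <= j k <= 2 * n)%N)
  (hcover : forall m, (1 <= m <= 2 * n)%N ->
      exists k, (1 <= k <= n)%N /\ (i k = m \/ j k = m))
  (hij : forall k, (1 <= k <= n)%N -> i k <> j k)
  (hinj : forall k l, (1 <= k <= n)%N -> (1 <= l <= n)%N -> k <> l ->
      i k <> i l /\ i k <> j l /\ j k <> i l /\ j k <> j l)
  (hlt : forall k, (1 <= k <= n)%N -> op (a (i k)) (a (j k)) < N) :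
  forall k, (1 <= k <= n)%N -> op (a k) (a (2 * n + 1 - k)) < N.
Proof.
case: HG => _ [opC op_mono] k hk.
have [m hm hp] := top_index_with_high_partner hrange hcover hij hinj hk.
have hmi : (1 <= m <= 2 * n)%N by lia.
have hpi := partner_range hrange hcover hmi.
have [/hlt pair_lt pm] := pair_indexP hcover hmi.
have pair_op_lt : op (a (partner n i j m)) (a m) < N.
  by case: pm pair_lt => -[-> ->]; rewrite // opC.
apply: le_lt_trans pair_op_lt.
by apply: op_mono; apply: (nondecreasing_le ha); lia.
Qed.
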